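(* Let $K\subset S^3$ be a knot whose A-polynomial $A_K(L,M)$ is irreducible in $\mathbb{C}[L,M]$ and satisfies $A_K(-L,M)\neq A_K(L,M)$. Let $R_K(L,M):=\mathrm{Res}_\lambda\big(A_K(\lambda,M),\lambda^2-L\big)$. Then $R_K(L,M^2)$ is irreducible in $\mathbb{C}[L,M]$ and $\deg_L(R_K)=\deg_L(A_K)$.
   Context: $A_K(L,M)$ is the A-polynomial of Cooper–Culler–Gillet–Long–Shalen of $K$ (without the abelian factor $L-1$); it satisfies $A_K(L,-M)=A_K(L,M)$. $\mathrm{Res}_\lambda$ denotes the resultant eliminating the variable $\lambda$. *)

(* C = complex R for an arbitrary R : realType (i.e. C is the
   field of complex numbers); C[L,M] is represented as {poly {poly C}} with
   outer indeterminate L and inner indeterminate M. *)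
From HB Require Import structures.
From mathcomp Require Import all_boot all_order all_algebra.
From mathcomp Require Import reals complex.
Set Implicit Arguments. Unset Strict Implicit. Unset Printing Implicit Defensive.
Import Order.TTheory GRing.Theory Num.Theory.
Local Open Scope ring_scope.

Definition irreducible_elt (T : idomainType) (p : T) : Prop :=
  [/\ p != 0, p \isn't a GRing.unit &
      forall a b : T, p = a * b -> a \is a GRing.unit \/ b \is a GRing.unit].

Section Biv.
Variable F : fieldType.
Definition bipoly := {poly {poly F}}.

Definition negM (P : bipoly) : bipoly := map_poly (fun c => c \Po (- 'X)) P.
Definition negL (P : bipoly) : bipoly := P \Po (- 'X).
Definition sqM (P : bipoly) : bipoly := map_poly (fun c => c \Po 'X^2) P.
Definition degL (P : bipoly) : nat := (size P).-1.
(* Res_lambda (P(lambda,M), lambda^2 - L): the polynomial P(lambda,M) has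
   coefficients in C[M] embedded in C[L,M]; lambda is a fresh outer variable *)
Definition resL (P : bipoly) : bipoly :=
  resultant (map_poly polyC P) ('X^2 - ('X : bipoly)%:P).
End Biv.

(* The resultant with a monic quadratic is [Res(p, X^2 - c) = r0^2 - c r1^2] for the
   remainder [r0 + r1 X] of [p] modulo [X^2 - c]; hence [R(L^2,M) = A(L,M) A(-L,M)],
   which gives the degree, and [R(L^2,M^2) = P(L,M) P(-L,M)] for [P := A(L,M^2)].
   Over an algebraically closed field an irreducible [P] of positive L-degree is prime
   in [C[M][L]] (Gauss's lemma, peeling linear factors off contents).
   [P] is irreducible: if [P = g h], comparing the norms [g(L,M) g(L,-M)] with [A^2]
   gives [g ~ h(L,-M)]; as [M -> iM] fixes [P], primality makes [h] irreducible with
   [h(L,-M) = +-h], which makes [A] reducible or odd in [M].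
   If [R(L,M^2) = g h], the prime [P] divides [g(L^2)], say; that polynomial is even
   in [L], so [P(-L,M)] divides it too, and since [P(-L,M)] is not associate to [P]
   ([A(-L,M) <> +-A]) the product [P(L,M) P(-L,M) = R(L^2,M^2)] divides [g(L^2)],
   so [h] is a unit. When [A(-L,M) = -A], [A = cL] and [R = -c^2 L]. *)

From HB Require Import structures.
From mathcomp Require Import all_boot all_order all_algebra.
From mathcomp Require Import reals complex.
From mathcomp Require Import zify ring.
Set Implicit Arguments. Unset Strict Implicit. Unset Printing Implicit Defensive.
Import Order.TTheory GRing.Theory Num.Theory.
Local Open Scope ring_scope.
Import Pdiv.Ring Pdiv.RingMonic.

Lemma size2_polyE (R : nzRingType) (r : {poly R}) :
  (size r <= 2)%N -> r = (r`_0)%:P + (r`_1)%:P * 'X.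
Proof.
move=> sr; apply/polyP => i; rewrite coefD coefMX !coefC.
by case: i => [|[|i]] /=; rewrite ?addr0 ?add0r // nth_default // (leq_trans sr).
Qed.

Section MonicResultant.
Variable R : comNzRingType.
Implicit Types p q : {poly R}.

Lemma rVpoly_sum d (u : 'rV[R]_d) : rVpoly u = \sum_(l < d) u 0 l *: 'X^l.
Proof.
rewrite {1}(row_sum_delta u) linear_sum; apply: eq_bigr => l _.
by rewrite linearZ /= rVpoly_delta.
Qed.

Lemma rVpoly_row_mx0 m n (u : 'rV[R]_m) :
  rVpoly (row_mx u (0 : 'rV[R]_n)) = rVpoly u.
Proof.
rewrite !rVpoly_sum big_split_ord /= [X in _ + X]big1 ?addr0 => [|l _].
  by apply: eq_bigr => l _; rewrite row_mxEl.
by rewrite row_mxEr mxE scale0r.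
Qed.

Lemma det_mx2 (A : 'M[R]_2) : \det A = A 0 0 * A 1 1 - A 0 1 * A 1 0.
Proof.
rewrite (expand_det_row _ 0) !big_ord_recl big_ord0 addr0 /cofactor !det_mx11.
rewrite !mxE /= expr0 expr1 mul1r mulN1r mulrN.
by congr (_ * A _ _ - A _ _ * A _ _); apply: val_inj.
Qed.

Lemma size_rdivp_monic p q : q \is monic ->
  (size (rdivp p q) <= size p - (size q).-1)%N.
Proof.
move=> mq; have [d0|d0] := eqVneq (rdivp p q) 0; first by rewrite d0 size_poly0.
have sr : (size (rmodp p q) < size q)%N by rewrite ltn_rmodp monic_neq0.
have := size_polyD p (- rmodp p q).
rewrite {1}(rdivp_eq mq p) addrK size_polyN size_Mmonic //.
have := size_poly_gt0 (rdivp p q); rewrite d0.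
move: (size _) (size _) (size p) (size q) sr => a b c e; lia.
Qed.

Section SylvesterFactor.
Variables p q : {poly R}.
Hypothesis mq : q \is monic.
Local Notation m := (size q).-1.
Local Notation n := (size p).-1.
Local Notation S := (Sylvester_mx p q).

Definition rmod_mx : 'M[R]_m := \matrix_(k < m) poly_rV (rmodp ('X^k * p) q).
Definition rdiv_mx : 'M[R]_(m, n) := \matrix_(k < m) poly_rV (rdivp ('X^k * p) q).

Lemma row_usubmx_Sylvester k : row k (usubmx S) = poly_rV ('X^k * p).
Proof.
apply/rowP => j; rewrite !mxE (unsplitK (inl k) : split (lshift _ k) = inl k).
by rewrite !mxE /= rVpoly_delta.
Qed.

Lemma row_dsubmx_Sylvester k : row k (dsubmx S) = poly_rV ('X^k * q).
Proof.
apply/rowP => j; rewrite !mxE (unsplitK (inr k) : split (rshift _ k) = inr k).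
by rewrite !mxE /= rVpoly_delta.
Qed.

Let size_q : size q = m.+1.
Proof. by rewrite prednK // size_poly_gt0 monic_neq0. Qed.

(* Row-reduce the upper block [X^k p] by the lower rows [X^l q]. *)
Lemma Sylvester_mx_monicE :
  S = block_mx rmod_mx rdiv_mx 0 1%:M *m col_mx (row_mx 1%:M 0) (dsubmx S).
Proof.
rewrite mul_block_col !mul0mx !mul1mx add0r mul_mx_row mulmx1 mulmx0.
rewrite -[LHS](vsubmxK S); congr col_mx.
apply/row_matrixP => k; apply: (can_inj (@rVpolyK _ _)).
have szr : (size (rmodp ('X^k * p) q) <= m)%N.
  by rewrite -ltnS -size_q ltn_rmodp monic_neq0.
have szXp : (size ('X^k * p)%R <= m + n)%N.
  have [->|p0] := eqVneq p 0; first by rewrite mulr0 size_poly0.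
  have sp : (0 < size p)%N by rewrite size_poly_gt0.
  rewrite mulrC size_mulXn //; move: (ltn_ord k) sp.
  by move: (nat_of_ord k) => a; rewrite -!subn1; lia.
have szd : (size (rdivp ('X^k * p) q) <= n)%N.
  by apply: leq_trans (size_rdivp_monic _ mq) _; rewrite leq_subLR.
have szXq (l : 'I_n) : (size ('X^l * q)%R <= m + n)%N.
  by rewrite mulrC size_mulXn ?monic_neq0 // size_q; move: (ltn_ord l) => /=; lia.
rewrite row_usubmx_Sylvester poly_rV_K // linearD /= row_mul row_row_mx row0.
rewrite linearD /= rVpoly_row_mx0 rowK poly_rV_K // mulmx_sum_row linear_sum /=.
rewrite (eq_bigr (fun l => rdiv_mx k l *: ('X^l * q))) => [|l _]; last first.
  by rewrite linearZ /= row_dsubmx_Sylvester poly_rV_K // [row k _ 0 l]mxE.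
have -> : \sum_(l < n) rdiv_mx k l *: ('X^l * q) = rVpoly (row k rdiv_mx) * q.
  rewrite rVpoly_sum mulr_suml; apply: eq_bigr => l _.
  by rewrite -scalerAl [row k _ 0 l]mxE.
by rewrite rowK poly_rV_K // addrC -rdivp_eq.
Qed.

Lemma det_Sylvester_monic_lower : \det (col_mx (row_mx 1%:M 0) (dsubmx S)) = 1.
Proof.
have Sij (i : 'I_n) (c : 'I_(m + n)) : dsubmx S i c = ('X^i * q)`_c.
  by have := congr1 (fun u : 'rV[R]_(m + n) => u ord0 c) (row_dsubmx_Sylvester i); rewrite !mxE.
rewrite -[dsubmx S]hsubmxK -/(block_mx _ _ _ _) det_lblock det1 mul1r.
rewrite det_trig; last first.
  apply/is_trig_mxP => i j ij; rewrite mxE Sij coefXnM /=.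
  case: ifP => // _; apply: nth_default; rewrite size_q.
  by move: ij; move: (nat_of_ord i) (nat_of_ord j) => a b; lia.
apply: big1 => i _; rewrite mxE Sij coefXnM /= ltnNge leq_addl /=.
by rewrite addnK -(eqP mq) lead_coefE.
Qed.

Lemma resultant_monic : resultant p q = \det rmod_mx.
Proof.
rewrite /resultant Sylvester_mx_monicE det_mulmx det_Sylvester_monic_lower.
by rewrite mulr1 det_ublock det1 mulr1.
Qed.

End SylvesterFactor.

Lemma resultant_X2subC p (c : R) :
  let r := rmodp p ('X^2 - c%:P) in resultant p ('X^2 - c%:P) = r`_0 ^+ 2 - c * r`_1 ^+ 2.
Proof.
set q := 'X^2 - c%:P => r.
have mq : q \is monic by apply: monicXnsubC.
have sq : size q = 3%N by apply: size_XnsubC.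
have sr : (size r <= 2)%N by rewrite -ltnS -sq ltn_rmodp monic_neq0.
set a := r`_0; set b := r`_1.
have er : r = a%:P + b%:P * 'X by exact: size2_polyE.
have erX : rmodp ('X * p) q = (b * c)%:P + a%:P * 'X.
  rewrite -rmodp_mulmr // -/r er.
  have -> : 'X * (a%:P + b%:P * 'X) = b%:P * q + ((b * c)%:P + a%:P * 'X).
    by rewrite /q polyCM; ring.
  rewrite rmodp_addl_mul_small // sq.
  apply: leq_ltn_trans (size_polyD _ _) _.
  rewrite gtn_max (leq_ltn_trans (size_polyC_leq1 _)) //=.
  apply: leq_ltn_trans (size_polyMleq _ _) _; rewrite size_polyX.
  by have := size_polyC_leq1 a; case: (size _) => [|[]].
rewrite resultant_monic // /rmod_mx sq det_mx2 !mxE /= expr0 mul1r expr1.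
rewrite erX -/r -/a modn_small // !coefD !coefMX !coefC /= -/b; ring.
Qed.

End MonicResultant.

Lemma horner_map_rmodp_X2subC (S T : comNzRingType) (f : {rmorphism S -> T})
    (p : {poly S}) (c : S) (x : T) :
  x ^+ 2 = f c ->
  (map_poly f p).[x] = f (rmodp p ('X^2 - c%:P))`_0 + f (rmodp p ('X^2 - c%:P))`_1 * x.
Proof.
move=> x2; set q := 'X^2 - c%:P; set r := rmodp p q.
have mq : q \is monic by apply: monicXnsubC.
have sr : (size r <= 2)%N by rewrite -ltnS -(size_XnsubC c (isT : 0 < 2)%N) ltn_rmodp monic_neq0.
have fq0 : (map_poly f q).[x] = 0.
  by rewrite rmorphB /= map_polyXn map_polyC !hornerE x2 subrr.
have -> : map_poly f p = map_poly f (rdivp p q) * map_poly f q + map_poly f r.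
  by rewrite -rmorphM -rmorphD -rdivp_eq.
rewrite hornerD hornerM fq0 mulr0 add0r {1}(size2_polyE sr).
by rewrite rmorphD rmorphM /= !map_polyC map_polyX !hornerE.
Qed.

Section ResultantSquare.
Variable F : fieldType.
Implicit Types P : bipoly F.

Definition sqL P : bipoly F := P \Po 'X^2.

Lemma sqL_resL P : sqL (resL P) = P * negL P.
Proof.
pose f : {rmorphism bipoly F -> bipoly F} := comp_poly 'X^2.
have fPC : map_poly f (map_poly polyC P) = map_poly polyC P.
  by rewrite -map_poly_comp; apply: eq_map_poly => c; rewrite /= comp_polyC.
rewrite /resL resultant_X2subC; set r := rmodp _ _.
have evalP (x : bipoly F) : x ^+ 2 = 'X^2 -> P \Po x = sqL r`_0 + sqL r`_1 * x.
  move=> x2; rewrite /comp_poly -fPC (@horner_map_rmodp_X2subC _ _ f _ 'X) //.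
  by rewrite /f /= comp_polyX.
have -> : negL P = sqL r`_0 - sqL r`_1 * 'X by rewrite /negL evalP ?sqrrN // mulrN.
rewrite -{1}(comp_polyXr P) evalP // /sqL rmorphB !rmorphM /= comp_polyX.
by ring.
Qed.

End ResultantSquare.

Section BipolyUnits.
Variable F : fieldType.

Lemma poly_unitfE (c : {poly F}) : (c \is a GRing.unit) = (size c == 1%N).
Proof.
rewrite poly_unitE; case: (eqVneq (size c) 1%N) => //= s1.
have -> : c`_0 = lead_coef c by rewrite lead_coefE s1.
by rewrite unitfE lead_coef_eq0 -size_poly_gt0 s1.
Qed.

Definition divides (P X : bipoly F) := exists W, X = P * W.

Lemma bipoly_unitE (P : bipoly F) :
  (P \is a GRing.unit) = (size P == 1%N) && (size P`_0 == 1%N).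
Proof. by rewrite poly_unitE poly_unitfE. Qed.

Lemma bipoly_unit_const (u : bipoly F) : u \is a GRing.unit -> u = (u`_0`_0)%:P%:P.
Proof.
rewrite bipoly_unitE => /andP[/eqP s1 /eqP s2].
by rewrite {1}(size1_polyC (eq_leq s1)) {1}(size1_polyC (eq_leq s2)).
Qed.

End BipolyUnits.

Section SubstM.
Variable F : fieldType.
Local Notation B := (bipoly F).
Implicit Types (P Q : B) (q r : {poly F}).

Definition substM q : {rmorphism B -> B} := map_poly (comp_poly q).

Lemma negME P : negM P = substM (- 'X) P. Proof. by []. Qed.
Lemma sqME P : sqM P = substM 'X^2 P. Proof. by []. Qed.

Lemma substM_comp q r P : substM q (substM r P) = substM (r \Po q) P.
Proof. by apply/polyP => i; rewrite !coef_map /= comp_polyA. Qed.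

Lemma substMX P : substM 'X P = P.
Proof. by apply/polyP => i; rewrite coef_map /= comp_polyXr. Qed.

Lemma substM_const q (c : F) : substM q c%:P%:P = c%:P%:P.
Proof. by rewrite /= map_polyC /= comp_polyC. Qed.

Lemma substM_unit_id q P : P \is a GRing.unit -> substM q P = P.
Proof. by move/bipoly_unit_const ->; rewrite substM_const. Qed.

Section NonConstant.
Variable q : {poly F}.
Hypothesis q_gt1 : (1 < size q)%N.

Lemma size_substM P : size (substM q P) = size P.
Proof.
have [->|P0] := eqVneq P 0; first by rewrite rmorph0.
by apply: size_map_poly_id0; rewrite /= comp_poly_eq0 // lead_coef_eq0.
Qed.

Lemma substM_eq0 P : (substM q P == 0) = (P == 0).
Proof. by rewrite -!size_poly_eq0 size_substM. Qed.

Lemma substM_unit P : (substM q P \is a GRing.unit) = (P \is a GRing.unit).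
Proof.
rewrite !bipoly_unitE size_substM coef_map /=; case: (size P == 1%N) => //=.
have [->|c0] := eqVneq P`_0 0; first by rewrite comp_poly0.
have sc : (0 < size (P`_0 \Po q)%R)%N by rewrite size_poly_gt0 comp_poly_eq0.
have sp : (0 < size (P`_0)%R)%N by rewrite size_poly_gt0.
move: (size_comp_poly P`_0 q) sc sp q_gt1.
move: (size (P`_0 \Po q)) (size P`_0) (size q) => a b c; rewrite -!subn1 => e *.
by apply/eqP/eqP => ?; nia.
Qed.

End NonConstant.

Lemma irreducible_substM q r P : (1 < size q)%N -> (1 < size r)%N -> q \Po r = 'X ->
  irreducible_elt P -> irreducible_elt (substM q P).
Proof.
move=> q_gt1 r_gt1 qr [P0 PnU irrP]; split; rewrite ?substM_eq0 ?substM_unit //.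
move=> a b eab; have : P = substM r a * substM r b.
  by rewrite -rmorphM -eab substM_comp qr substMX.
by move/irrP; rewrite !substM_unit.
Qed.

End SubstM.

Section SubstL.
Variable F : fieldType.
Local Notation B := (bipoly F).
Implicit Types P Q : B.

Lemma negLM P Q : negL (P * Q) = negL P * negL Q.
Proof. exact: comp_polyM. Qed.

Lemma sqLM P Q : sqL (P * Q) = sqL P * sqL Q.
Proof. exact: comp_polyM. Qed.

Lemma negLK P : negL (negL P) = P.
Proof. by rewrite /negL -comp_polyA linearN /= comp_polyX opprK comp_polyXr. Qed.

Lemma negL_sqL P : negL (sqL P) = sqL P.
Proof. by rewrite /negL /sqL -comp_polyA rmorphXn /= comp_polyX sqrrN. Qed.

Lemma negL_unit_id P : P \is a GRing.unit -> negL P = P.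
Proof. by move/bipoly_unit_const ->; rewrite /negL comp_polyC. Qed.

Lemma size_negL P : size (negL P) = size P.
Proof. by rewrite size_comp_poly2 // size_polyN size_polyX. Qed.

Lemma size_sqL P : (size (sqL P)).-1 = ((size P).-1 * 2)%N.
Proof. by rewrite size_comp_poly size_polyXn. Qed.

Lemma degL_resL P : P != 0 -> degL (resL P) = degL P.
Proof.
move=> P0; have NP0 : negL P != 0 by rewrite -size_poly_eq0 size_negL size_poly_eq0.
move: (size_sqL (resL P)) (size_poly_gt0 P); rewrite sqL_resL size_mul // size_negL P0.
by rewrite /degL; move: (size P) (size (resL P)) => a r; rewrite -!subn1; lia.
Qed.

Lemma sqL_inj : injective (@sqL F).
Proof.
move=> P Q e; apply/eqP; rewrite -subr_eq0 -(comp_poly_eq0 _ (q := 'X^2)) ?size_polyXn //.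
by rewrite comp_polyB -!/(sqL _) e subrr.
Qed.

Lemma sqL_unit P : sqL P \is a GRing.unit -> P \is a GRing.unit.
Proof.
move=> PU; have := PU; rewrite bipoly_unitE => /andP[/eqP s1 _].
have : ((size P).-1 * 2)%N = 0%N by rewrite -size_sqL s1.
move/eqP; rewrite muln_eq0 orbF => /eqP sP.
have sP1 : (size P <= 1)%N by move: sP; case: (size P) => [|[]].
by move: PU; rewrite /sqL (size1_polyC sP1) comp_polyC.
Qed.

Lemma sqM_negL P : sqM (negL P) = negL (sqM P).
Proof. by rewrite /sqM /negL map_comp_poly rmorphN /= map_polyX. Qed.

Lemma sqM_sqL P : sqM (sqL P) = sqL (sqM P).
Proof. by rewrite /sqM /sqL map_comp_poly rmorphXn /= map_polyX. Qed.

Lemma divides_negL_sign P : P != 0 -> divides P (negL P) -> negL P = P \/ negL P = - P.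
Proof.
move=> P0 [k Pk].
have kk : k * negL k = 1.
  by apply: (mulfI P0); rewrite mulr1 mulrA -Pk -negLM -Pk negLK.
have kU : k \is a GRing.unit by apply/unitrPr; exists (negL k).
have /eqP : k ^+ 2 = 1 by rewrite expr2 -{2}(negL_unit_id kU).
by rewrite sqrf_eq1 => /orP[] /eqP k1; [left|right]; rewrite Pk k1 ?mulr1 ?mulrN1.
Qed.

Lemma irreducible_CX (d : F) : d != 0 -> irreducible_elt (d%:P%:P * 'X : B).
Proof.
move=> d0; have dX2 : size (d%:P%:P * 'X : B) = 2%N.
  by rewrite mul_polyC size_scale ?size_polyX // !polyC_eq0.
split; [by rewrite -size_poly_eq0 dX2 | by rewrite bipoly_unitE dX2 |].
have unit_of_coef1 (a b : B) : size a = 1%N -> (a * b)`_1 = d%:P -> a \is a GRing.unit.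
  move=> sa; rewrite bipoly_unitE sa -poly_unitfE {1}(size1_polyC (eq_leq sa)) coefCM.
  move=> ab; have : a`_0 * b`_1 \is a GRing.unit by rewrite ab poly_unitfE size_polyC d0.
  by rewrite unitrM => /andP[].
move=> g h dgh; have dX1 : (g * h)`_1 = d%:P by rewrite -dgh coefCM coefX mulr1.
have g0 : g != 0 by apply/eqP => g0; move: dX2; rewrite dgh g0 mul0r size_poly0.
have h0 : h != 0 by apply/eqP => h0; move: dX2; rewrite dgh h0 mulr0 size_poly0.
have [sg1|sh1] : size g = 1%N \/ size h = 1%N.
  move: dX2 (size_poly_gt0 g) (size_poly_gt0 h); rewrite dgh size_mul // g0 h0.
  by move: (size g) (size h) => m n; lia.
- by left; apply: unit_of_coef1 dX1.
- by right; apply: (unit_of_coef1 _ g sh1); rewrite mulrC.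
Qed.

End SubstL.

Section ClosedFieldPrime.
Variable F : closedFieldType.
Local Notation B := (bipoly F).
Implicit Types P Q X Y Z : B.

Definition evalM (z : F) : {rmorphism B -> {poly F}} := map_poly (horner_eval z).

Lemma evalM_polyC z (c : {poly F}) X : evalM z (c%:P * X) = c.[z] *: evalM z X.
Proof. by rewrite rmorphM /= map_polyC /= mul_polyC. Qed.

Lemma evalM_eq0 z X : evalM z X = 0 ->
  X = ('X - z%:P)%:P * map_poly (fun c => c %/ ('X - z%:P)) X.
Proof.
move=> Xz0; apply/polyP => i; rewrite coefCM coef_map_id0 ?div0p //.
have : (evalM z X)`_i = 0 by rewrite Xz0 coef0.
rewrite coef_map /= /horner_eval => Xiz0.
by rewrite mulrC divpK // dvdp_XsubCl /root Xiz0.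
Qed.

Lemma content_split (c : {poly F}) X Y Z : c != 0 -> c%:P * X = Y * Z ->
  exists d1 d2 Y' Z', [/\ Y = d1%:P * Y', Z = d2%:P * Z' & X = Y' * Z'].
Proof.
(* A root [z] of [c] kills [Y] or [Z] at [M = z], so [M - z] divides all its coefficients. *)
move: {2}(size c) (leqnn (size c)) => n; elim: n c X Y Z => [|n IH] c X Y Z.
  by rewrite size_poly_leq0 => /eqP->; rewrite eqxx.
move=> sc c0 cXYZ.
have [/eqP c1|] := eqVneq (size c) 1%N.
  have cu : c \is a GRing.unit by rewrite poly_unitfE c1.
  exists c, 1, (c^-1%:P * Y), Z; split; rewrite ?mul1r //.
    by rewrite mulrA -polyCM divrr // mul1r.
  by rewrite -mulrA -cXYZ mulrA -polyCM mulVr // mul1r.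
move/closed_rootP => [z cz0].
set c' := c %/ ('X - z%:P).
have ec : c = c' * ('X - z%:P) by rewrite divpK // dvdp_XsubCl.
have c'0 : c' != 0 by apply: contraNneq c0 => c'0; rewrite ec c'0 mul0r.
have sc' : (size c' <= n)%N.
  by move: sc; rewrite ec size_mul ?polyXsubC_eq0 // size_XsubC addn2.
have nzX : ('X - z%:P)%:P != 0 :> B by rewrite polyC_eq0 polyXsubC_eq0.
have : evalM z (Y * Z) = 0 by rewrite -cXYZ evalM_polyC -/(root c z) (eqP cz0) scale0r.
rewrite rmorphM => /eqP; rewrite mulf_eq0 => /orP[] /eqP /evalM_eq0 eYZ.
- move: cXYZ; rewrite {}eYZ ec polyCM -!mulrA [LHS]mulrCA => /(mulfI nzX) e.
  have [d1 [d2 [Y' [Z' [-> -> ->]]]]] := IH _ _ _ _ sc' c'0 e.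
  by exists (('X - z%:P) * d1), d2, Y', Z'; rewrite polyCM mulrA.
- move: cXYZ; rewrite {}eYZ ec polyCM -!mulrA [LHS]mulrCA [RHS]mulrCA.
  move=> /(mulfI nzX) e.
  have [d1 [d2 [Y' [Z' [-> -> ->]]]]] := IH _ _ _ _ sc' c'0 e.
  by exists d1, (('X - z%:P) * d2), Y', Z'; rewrite polyCM mulrA.
Qed.

Lemma divides_content_free P (c : {poly F}) X W : (forall z, evalM z P != 0) ->
  c != 0 -> c%:P * X = P * W -> divides P X.
Proof.
move=> Pz0 c0 e.
have [d1 [d2 [P' [W' [eP _ eX]]]]] := content_split c0 e.
have [/eqP s1|] := eqVneq (size d1) 1%N; last first.
  move/closed_rootP => [z d1z]; have := Pz0 z.
  by rewrite eP evalM_polyC (eqP d1z) scale0r eqxx.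
have d1U : d1 \is a GRing.unit by rewrite poly_unitfE s1.
by exists (d1^-1%:P * W'); rewrite eX eP mulrACA -polyCM divrr // mul1r.
Qed.

Lemma evalM_irreducible_neq0 P z : irreducible_elt P -> (0 < degL P)%N ->
  evalM z P != 0.
Proof.
move=> [P0 PnU irrP] dP; apply/negP => /eqP /evalM_eq0 eP.
have [|] := irrP _ _ eP; rewrite bipoly_unitE.
  by rewrite size_polyC polyXsubC_eq0 /= coefC /= size_XsubC.
move=> /andP[/eqP s1 _]; move: dP.
by rewrite /degL eP mul_polyC size_scale ?s1 // polyXsubC_eq0.
Qed.

Lemma irreducible_dvd_or_content P g : irreducible_elt P -> (0 < degL P)%N ->
  divides P g \/ exists2 c : {poly F}, c != 0 & exists u v, c%:P = u * P + v * g.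
Proof.
move=> irrP dP; have Pz0 z := evalM_irreducible_neq0 z irrP dP.
have P0 : P != 0 by case: irrP.
(* Descent on a nonzero [r = u P + v g] of least size: the pseudo-remainders of [P]
   and [g] by [r] lie in the same ideal, so [r] divides both up to contents. *)
suff: forall n (r u v : B), (size r <= n)%N -> r != 0 -> r = u * P + v * g ->
    divides P g \/ exists2 c : {poly F}, c != 0 & exists u v, c%:P = u * P + v * g.
  by move/(_ (size P) P 1 0 (leqnn _) P0); apply; rewrite mul1r mul0r addr0.
elim=> [|n IH] r u v; first by rewrite size_poly_leq0 => /eqP->; rewrite eqxx.
move=> sr r0 er.
have lc0 : lead_coef r != 0 by rewrite lead_coef_eq0.
have modE X : X %% r = (lead_coef r ^+ scalp X r)%:P * X - X %/ r * r.
  by rewrite mul_polyC Pdiv.Idomain.divp_eq addrC addKr.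
have size_mod X : (size (X %% r)%R <= n)%N.
  by rewrite -ltnS (leq_trans _ sr) // Pdiv.Idomain.ltn_modp.
have [PrP|PrP] := eqVneq (P %% r) 0; last first.
  move: (modE P); set K := (_ ^+ _)%:P; set Q := P %/ r => e.
  apply: (IH _ (K - Q * u) (- (Q * v)) (size_mod P) PrP).
  by rewrite e; clearbody K Q; rewrite er; ring.
have [grg|grg] := eqVneq (g %% r) 0; last first.
  move: (modE g); set K := (_ ^+ _)%:P; set Q := g %/ r => e.
  apply: (IH _ (- (Q * u)) (K - Q * v) (size_mod g) grg).
  by rewrite e; clearbody K Q; rewrite er; ring.
move: (modE P) (modE g); rewrite PrP grg.
set K1 := lead_coef r ^+ _; set K2 := lead_coef r ^+ _.
have K10 : K1 != 0 by rewrite expf_neq0.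
have K20 : K2 != 0 by rewrite expf_neq0.
move: K1 K2 K10 K20 (P %/ r) (g %/ r) => K1 K2 K10 K20 Q1 Q2.
move=> /esym /subr0_eq e1 /esym /subr0_eq e2.
have [d1 [d2 [r' [Q' [er' _ ePQ]]]]] := content_split K10 (etrans e1 (mulrC _ _)).
have [_ _ irr] := irrP; have [r'U|Q'U] := irr _ _ ePQ.
  right; have sr' : size r' = 1%N by move: r'U; rewrite bipoly_unitE => /andP[/eqP].
  have r'C : r' = (r'`_0)%:P by apply: size1_polyC; rewrite sr'.
  exists (d1 * r'`_0); last by exists u, v; rewrite polyCM -r'C -er'.
  by apply: contraNneq r0 => d0; rewrite er' r'C -polyCM d0.
left; apply: (divides_content_free (W := Q2 * d1%:P / Q') Pz0 K20).
have r'E : r' = P / Q' by rewrite ePQ mulrK.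
by rewrite e2 er' r'E; ring.
Qed.

Lemma irreducible_prime P g h : irreducible_elt P -> (0 < degL P)%N ->
  divides P (g * h) -> divides P g \/ divides P h.
Proof.
move=> irrP dP [w ew].
have [|[c c0 [u [v ec]]]] := irreducible_dvd_or_content g irrP dP; first by left.
right; apply: (divides_content_free (W := u * h + v * w) _ c0).
  by move=> z; apply: evalM_irreducible_neq0.
by rewrite ec mulrDl -[v * g * h]mulrA ew; ring.
Qed.

End ClosedFieldPrime.

Section SplitL.
Variable F : closedFieldType.
Local Notation B := (bipoly F).

Lemma irreducible_sqL_split (P f : B) : irreducible_elt P -> (0 < degL P)%N ->
  ~ divides P (negL P) -> sqL f = P * negL P -> irreducible_elt f.
Proof.
move=> irrP dP nPN fP; have [P0 PnU _] := irrP.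
have NP0 : negL P != 0 by rewrite -size_poly_eq0 size_negL size_poly_eq0.
have PNP0 := mulf_neq0 P0 NP0.
split.
- by apply: contra_neq PNP0 => f0; rewrite -fP f0 /sqL comp_poly0.
- apply: contra PnU => fU; have /bipoly_unit_const fC := fU.
  have : sqL f \is a GRing.unit by rewrite /sqL fC comp_polyC -fC.
  by rewrite fP unitrM => /andP[].
suff no_factor g h : f = g * h -> g \isn't a GRing.unit -> h \isn't a GRing.unit ->
    ~ divides P (sqL g).
  move=> g h fgh; case gU: (g \is a GRing.unit); first by left.
  case hU: (h \is a GRing.unit); first by right.
  have : divides P (sqL g * sqL h) by exists (negL P); rewrite -sqLM -fgh fP.
  case/(irreducible_prime irrP dP); first by case/(no_factor g h); rewrite ?gU ?hU.
  by case/(no_factor h g); rewrite ?gU ?hU // mulrC.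
move=> fgh gU hU [w gw].
have gNw : sqL g = negL P * negL w by rewrite -negL_sqL gw negLM.
have : divides P (negL P * negL w) by exists w; rewrite -gNw gw.
case/(irreducible_prime irrP dP) => // - [w2 w2E].
have hw2 : sqL h * w2 = 1.
  by apply: (mulfI PNP0); rewrite mulr1 -[RHS]fP fgh sqLM gNw w2E; ring.
by move: hU; rewrite (sqL_unit (introT unitrPr (ex_intro _ w2 hw2))).
Qed.

End SplitL.

Lemma addrr_eq0 (R : idomainType) (x : R) : 2%:R != 0 :> R -> x + x = 0 -> x = 0.
Proof. by move=> two0 /eqP; rewrite -mulr2n -mulr_natr mulf_eq0 (negbTE two0) orbF => /eqP. Qed.

Section EvenOddM.
Variable F : numClosedFieldType.
Local Notation B := (bipoly F).
Implicit Types P Q : B.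

Lemma bipoly_double_eq0 P : P + P = 0 -> P = 0.
Proof. by apply: addrr_eq0; rewrite -!polyC_natr !polyC_eq0 pnatr_eq0. Qed.

Lemma poly_double_eq0 (c : {poly F}) : c + c = 0 -> c = 0.
Proof. by apply: addrr_eq0; rewrite -polyC_natr polyC_eq0 pnatr_eq0. Qed.

Definition rotM P : B := substM ('i *: 'X) P.

Lemma size_iX : size ('i *: 'X : {poly F}) = 2%N.
Proof. by rewrite size_scale ?neq0Ci // size_polyX. Qed.

Lemma size_NX : size (- 'X : {poly F}) = 2%N.
Proof. by rewrite size_polyN size_polyX. Qed.

Lemma size_X2 : size ('X^2 : {poly F}) = 3%N.
Proof. by rewrite size_polyXn. Qed.

Lemma negMM P Q : negM (P * Q) = negM P * negM Q.
Proof. by rewrite negME rmorphM. Qed.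

Lemma sqMM P Q : sqM (P * Q) = sqM P * sqM Q.
Proof. by rewrite sqME rmorphM. Qed.

Lemma rotMM P Q : rotM (P * Q) = rotM P * rotM Q.
Proof. by rewrite /rotM rmorphM. Qed.

Lemma sqM_eq0 P : (sqM P == 0) = (P == 0).
Proof. by rewrite sqME substM_eq0 ?size_X2. Qed.

Lemma sqM_unit P : (sqM P \is a GRing.unit) = (P \is a GRing.unit).
Proof. by rewrite sqME substM_unit ?size_X2. Qed.

Lemma negM_unit_id P : P \is a GRing.unit -> negM P = P.
Proof. exact: substM_unit_id. Qed.

Lemma sqM_unit_id P : P \is a GRing.unit -> sqM P = P.
Proof. exact: substM_unit_id. Qed.

Lemma negMK P : negM (negM P) = P.
Proof. by rewrite !negME substM_comp linearN /= comp_polyX opprK substMX. Qed.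

Lemma rotM_rotM P : rotM (rotM P) = negM P.
Proof.
by rewrite /rotM negME substM_comp linearZ /= comp_polyX scalerA -expr2 sqrCi scaleN1r.
Qed.

Lemma rotM_sqM P : rotM (sqM P) = sqM (negM P).
Proof.
rewrite /rotM !sqME negME !substM_comp rmorphXn /= comp_polyX linearN /= comp_polyX.
by rewrite exprZn sqrCi scaleN1r.
Qed.

Lemma negM_sqM P : negM (sqM P) = sqM P.
Proof. by rewrite negME sqME substM_comp rmorphXn /= comp_polyX sqrrN. Qed.

Lemma irreducible_rotM P : irreducible_elt P -> irreducible_elt (rotM P).
Proof.
apply: (@irreducible_substM _ _ (- 'i *: 'X)); rewrite ?size_iX ?size_scale ?size_polyX //.
  by rewrite oppr_eq0 neq0Ci.
by rewrite linearZ /= comp_polyX scalerA mulrN -expr2 sqrCi opprK scale1r.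
Qed.

Lemma irreducible_negM P : irreducible_elt P -> irreducible_elt (negM P).
Proof. by move=> ?; rewrite -rotM_rotM; do 2 apply: irreducible_rotM. Qed.

Lemma sqM_inj : injective (@sqM F).
Proof.
move=> P Q e; apply/eqP; rewrite -subr_eq0 -(substM_eq0 _ (q := 'X^2)) ?size_X2 //.
by rewrite rmorphB /= -!sqME e subrr.
Qed.

Lemma comp_polyNX (c : {poly F}) :
  c \Po (- 'X) = (even_poly c \Po 'X^2) - (odd_poly c \Po 'X^2) * 'X.
Proof.
rewrite -{1}(poly_even_odd c) comp_polyD comp_polyM comp_polyX.
by rewrite -!comp_polyA rmorphXn /= comp_polyX sqrrN mulrN.
Qed.

Lemma comp_polyNX_id (c : {poly F}) : c \Po (- 'X) = c -> c = even_poly c \Po 'X^2.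
Proof.
move=> cN; have := poly_even_odd c; have := comp_polyNX c; rewrite cN.
set E := even_poly c \Po _; set O := _ * 'X => cEO cEO'.
suff /poly_double_eq0 O0 : O + O = 0 by rewrite -{1}cEO' O0 addr0.
have -> : O + O = (E + O) - (E - O) by ring.
by rewrite cEO' -cEO subrr.
Qed.

Lemma comp_polyNX_opp (c : {poly F}) : c \Po (- 'X) = - c ->
  c = (odd_poly c \Po 'X^2) * 'X.
Proof.
move=> cN; have := poly_even_odd c; have := comp_polyNX c; rewrite cN.
set E := even_poly c \Po _; set O := _ * 'X => cEO cEO'.
suff /poly_double_eq0 E0 : E + E = 0 by rewrite -{1}cEO' E0 add0r.
have -> : E + E = (E + O) + (E - O) by ring.
by rewrite cEO' -cEO subrr.
Qed.

Lemma negM_fixedE P : negM P = P -> P = sqM (map_poly (@even_poly _) P).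
Proof.
move=> PN; apply/polyP => i; rewrite sqME !coef_map /=.
by apply: comp_polyNX_id; rewrite -[RHS](congr1 (fun Q : B => Q`_i) PN) coef_map.
Qed.

Lemma negM_oppE P : negM P = - P -> P = ('X)%:P * sqM (map_poly (@odd_poly _) P).
Proof.
move=> PN; apply/polyP => i; rewrite coefCM sqME !coef_map /= mulrC.
apply: comp_polyNX_opp; rewrite -coefN -[RHS](congr1 (fun Q : B => Q`_i) PN).
by rewrite coef_map.
Qed.

End EvenOddM.

Section SquareM.
Variable F : numClosedFieldType.
Local Notation B := (bipoly F).
Implicit Types P Q g h : B.

Definition normM g : B := map_poly (@even_poly _) (g * negM g).

Lemma sqM_normM g : sqM (normM g) = g * negM g.
Proof. by rewrite -negM_fixedE // negMM negMK mulrC. Qed.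

Lemma size_unit_mul u P : u \is a GRing.unit -> size (u * P) = size P.
Proof.
move=> uU; have uE := bipoly_unit_const uU.
rewrite uE mul_polyC size_scale //; apply: contraTneq uU => u0.
by rewrite uE u0 rmorph0 unitr0.
Qed.

Lemma rotM_unit_id P : P \is a GRing.unit -> rotM P = P.
Proof. exact: substM_unit_id. Qed.

Lemma rotM_assoc_negM h u : u \is a GRing.unit -> rotM h = h * u ->
  negM h = h * (u * u).
Proof. by move=> uU hu; rewrite -rotM_rotM hu rotMM (rotM_unit_id uU) hu mulrA. Qed.

Variable A : B.
Hypotheses (irrA : irreducible_elt A) (dA : (0 < degL A)%N) (AN : negM A = A).

Lemma sqM_factor_normM g h : sqM A = g * h -> h \isn't a GRing.unit ->
  divides A (normM g) -> exists2 s, s \is a GRing.unit & g = s * negM h.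
Proof.
move=> Agh hU [k ek].
have A0 : A != 0 by case: irrA.
have g0 : g != 0 by apply: contra_neq A0 => g0; apply/eqP; rewrite -sqM_eq0 Agh g0 mul0r.
have gN : negM g = h * sqM k.
  by apply: (mulfI g0); rewrite -sqM_normM ek sqMM Agh; ring.
have gE : g = negM h * sqM k by rewrite -[g]negMK gN negMM negM_sqM.
have AkH : A = k * normM h by apply: sqM_inj; rewrite sqMM sqM_normM Agh gE; ring.
have [_ _ irr] := irrA; have [kU|HU] := irr _ _ AkH.
  by exists (sqM k); [rewrite sqM_unit | rewrite gE mulrC].
by move: HU; rewrite -sqM_unit sqM_normM unitrM (negbTE hU).
Qed.

Lemma sqM_factor_conj g h : sqM A = g * h -> g \isn't a GRing.unit ->
  h \isn't a GRing.unit -> exists2 s, s \is a GRing.unit & g = s * negM h.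
Proof.
move=> Agh gU hU.
have AA : divides A (normM g * normM h).
  exists A; apply: sqM_inj; rewrite !sqMM !sqM_normM.
  by rewrite -{2}(negM_sqM A) Agh negMM; ring.
have [|Ah] := irreducible_prime irrA dA AA; first exact: sqM_factor_normM.
have [s sU gs] := sqM_factor_normM (etrans Agh (mulrC _ _)) gU Ah.
exists s^-1; first by rewrite unitrV.
by rewrite gs negMM negMK (negM_unit_id sU) mulKr.
Qed.

Section SquareMFactor.
Variables g h : B.
Hypotheses (Agh : sqM A = g * h) (gU : g \isn't a GRing.unit) (hU : h \isn't a GRing.unit).

Let h0 : h != 0.
Proof.
have A0 : A != 0 by case: irrA.
by apply: contra_neq A0 => h0; apply/eqP; rewrite -sqM_eq0 Agh h0 mulr0.
Qed.

Lemma sqM_factor_irreducible : irreducible_elt h.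
Proof.
have [s sU gs] := sqM_factor_conj Agh gU hU.
split=> // h1 h2 h12; apply/orP; apply: contraT; rewrite negb_or => /andP[h1U h2U].
have A12 : sqM A = (g * h1) * h2 by rewrite Agh h12 mulrA.
have gh1U : g * h1 \isn't a GRing.unit by rewrite unitrM negb_and gU.
have [s' s'U gh1] := sqM_factor_conj A12 gh1U h2U.
have Nh20 : negM h2 != 0.
  by apply: contra_neq h0 => h20; rewrite h12 -[h2]negMK h20 negME rmorph0 mulr0.
have : s' = s * negM h1 * h1 by apply: (mulIf Nh20); rewrite -gh1 gs h12 negMM; ring.
by move=> s'E; move: s'U; rewrite s'E !unitrM (negbTE h1U) andbF.
Qed.

Lemma sqM_factor_degL : (0 < degL h)%N.
Proof.
have [s sU gs] := sqM_factor_conj Agh gU hU.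
have Nh0 : negM h != 0 by apply: contra_neq h0 => Nh0; rewrite -[h]negMK Nh0 negME rmorph0.
move: dA; rewrite /degL -(size_substM _ (q := 'X^2)) ?size_X2 // -sqME Agh gs -mulrA.
rewrite size_unit_mul // size_mul // negME size_substM ?size_NX //.
by case: (size h) => [|[|]].
Qed.

Lemma sqM_factor_negM_assoc : exists2 v, v \is a GRing.unit & negM h = h * v.
Proof.
have [s sU gs] := sqM_factor_conj Agh gU hU.
have irrh := sqM_factor_irreducible; have dh := sqM_factor_degL.
have [_ _ irr] := irrh.
suff [u uU hu] : exists2 u, u \is a GRing.unit & rotM h = h * u.
  by exists (u * u); [rewrite unitrM uU | exact: rotM_assoc_negM].
(* [M -> iM] fixes [sqM A] because [A] is even in [M]. *)
have hrot : divides h (rotM g * rotM h).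
  by exists g; rewrite -rotMM -Agh rotM_sqM AN Agh mulrC.
have [[w gw]|[w hw]] := irreducible_prime irrh dh hrot; last first.
  have [_ _ /(_ _ _ hw) []] := irreducible_rotM irrh; first by rewrite (negbTE hU).
  by exists w.
have irr3 : irreducible_elt (rotM (negM h)) by apply/irreducible_rotM/irreducible_negM.
have h3 : rotM (negM h) = h * (s^-1 * w) by rewrite mulrCA -gw gs rotMM (rotM_unit_id sU) mulKr.
have [_ _ /(_ _ _ h3) [|wU]] := irr3; first by rewrite (negbTE hU).
exists (s^-1 * w)^-1; first by rewrite unitrV.
by rewrite -[h in RHS]negMK -rotM_rotM h3 rotMM (rotM_unit_id wU) mulrK.
Qed.

End SquareMFactor.

Lemma irreducible_sqM : irreducible_elt (sqM A).
Proof.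
have [A0 AnU irr] := irrA.
split; rewrite ?sqM_eq0 ?sqM_unit //.
move=> g h Agh; apply/orP; apply: contraT; rewrite negb_or => /andP[gU hU].
have [s sU gs] := sqM_factor_conj Agh gU hU.
have [v vU hv] := sqM_factor_negM_assoc Agh gU hU.
have h0 : h != 0 by apply: contra_neq A0 => h0; apply/eqP; rewrite -sqM_eq0 Agh h0 mulr0.
have /eqP : v ^+ 2 = 1.
  by apply: (mulfI h0); rewrite mulr1 mulrA -hv -{1}(negM_unit_id vU) -negMM -hv negMK.
rewrite sqrf_eq1 => /orP[] /eqP v1.
  have /negM_fixedE hE : negM h = h by rewrite hv v1 mulr1.
  set h' := map_poly _ h in hE.
  have Ah' : A = (s * h') * h'.
    by apply: sqM_inj; rewrite !sqMM (sqM_unit_id sU) -hE Agh gs hv v1 mulr1.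
  have [|h'U] := irr _ _ Ah'; last by move: hU; rewrite hE sqM_unit h'U.
  by rewrite unitrM => /andP[_ h'U]; move: hU; rewrite hE sqM_unit h'U.
have /negM_oppE hE : negM h = - h by rewrite hv v1 mulrN1.
set h' := map_poly _ h in hE.
have XnU : ('X%:P : B) \isn't a GRing.unit.
  by rewrite bipoly_unitE size_polyC polyX_eq0 /= coefC /= size_polyX.
have sX : sqM ('X%:P : B) = 'X%:P ^+ 2 by rewrite sqME /= map_polyC /= comp_polyX rmorphXn.
have Ah' : A = (- s * 'X%:P * h') * h'.
  apply: sqM_inj; rewrite !sqMM Agh gs hv v1 mulrN1 hE sX.
  by rewrite [sqM (- s)]sqME rmorphN -sqME (sqM_unit_id sU); ring.
have [|h'U] := irr _ _ Ah'; first by rewrite !unitrM unitrN sU (negbTE XnU) andbF.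
suff : negM A = - A.
  rewrite AN => /eqP; rewrite -subr_eq0 opprK => /eqP /bipoly_double_eq0 /eqP.
  by rewrite (negbTE A0).
have NX : negM ('X%:P : B) = - 'X%:P by rewrite negME /= map_polyC /= comp_polyX polyCN.
rewrite {1}Ah' !negMM [negM (- s)]negME rmorphN -negME NX.
by rewrite (negM_unit_id sU) (negM_unit_id h'U) Ah'; ring.
Qed.

End SquareM.

Section OddL.
Variable F : numClosedFieldType.
Local Notation B := (bipoly F).

Lemma irreducible_sqM_resL_odd (A : B) : irreducible_elt A -> negL A = - A ->
  irreducible_elt (sqM (resL A)).
Proof.
move=> irrA AN; have [A0 _ irr] := irrA.
have A00 : A`_0 = 0.
  apply: poly_double_eq0; have : (negL A)`_0 = A`_0.
    by rewrite -!horner_coef0 /negL horner_comp hornerN hornerX oppr0.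
  by rewrite AN coefN => NA; rewrite -{1}NA addNr.
have AX : A = drop_poly 1 A * 'X.
  rewrite -{1}(poly_take_drop 1 A) expr1 [take_poly _ _](_ : _ = 0) ?add0r //.
  by apply/polyP => -[|i]; rewrite coef_poly coef0 //= A00.
have [cU|] := irr _ _ AX; last by rewrite bipoly_unitE size_polyX.
have cE := bipoly_unit_const cU; set c := (drop_poly 1 A)`_0`_0 in cE.
have c0 : c != 0 by apply: contraTneq cU => c0; rewrite cE c0 !rmorph0 unitr0.
have RE : resL A = (- c ^+ 2)%:P%:P * 'X.
  apply: sqL_inj; rewrite sqL_resL AN AX cE /sqL comp_polyM comp_polyC comp_polyX.
  by rewrite !rmorphN !rmorphXn /=; ring.
rewrite RE sqMM sqME substM_const [sqM _]sqME /= map_polyX.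
by apply: irreducible_CX; rewrite oppr_eq0 expf_neq0.
Qed.

End OddL.

Theorem proposition4p2 (R : realType) (A : bipoly R[i]) :
  irreducible_elt A ->
  negM A = A ->
  negL A != A ->
  irreducible_elt (sqM (resL A)) /\ degL (resL A) = degL A.
Proof.
move=> irrA AN nAL; have [A0 _ _] := irrA.
have dA : (0 < degL A)%N.
  rewrite /degL -subn1 subn_gt0 ltnNge; apply: contra nAL => sA.
  by rewrite /negL (size1_polyC sA) comp_polyC.
split; last exact: degL_resL.
have [ANA|nANA] := eqVneq (negL A) (- A); first exact: irreducible_sqM_resL_odd.
apply: (@irreducible_sqL_split _ (sqM A)).
- exact: irreducible_sqM.
- by rewrite /degL sqME size_substM ?size_X2.
- case/divides_negL_sign; rewrite ?sqM_eq0 // -sqM_negL.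
    by move/sqM_inj; apply/eqP.
  by rewrite sqME -rmorphN -sqME => /sqM_inj; apply/eqP.
- by rewrite -sqM_sqL sqL_resL sqMM sqM_negL.
Qed.
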